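(* Let $K$ be a knot. (a) If $\mathcal{H}(K)$ is supported in a single $\Delta$-grading, then $K$ is $d_1$-standard. (b) Suppose $\mathcal{H}(K)$ is supported in two neighboring $\Delta$-gradings $\Delta$ and $\Delta+2$, and $$\max\{a:\mathcal{H}^{a,\Delta+2}\neq0\}-4<\min\{a:\mathcal{H}^{a,\Delta}\ne0\}.$$ Then $K$ is $d_1$-standard.
   Context: For a knot $K$, $\mathcal{H}(K)$ is reduced triply graded (HOMFLY-PT) Khovanov–Rozansky homology over $\mathbb{Q}$, a finite-dimensional space graded by $(q,a,t)$; $\Delta=q+a+t$, and $\mathcal{H}^{a,\Delta}$ denotes the part of $\mathcal{H}(K)$ in $a$-degree $a$ and $\Delta$-grading $\Delta$. By Rasmussen, there is a spectral sequence (the $\mathfrak{sl}(1)$ spectral sequence) with first page $\mathcal{H}(K)$ whose $i$-th differential $d_1^{(i)}$ changes degrees by $(q,a,t)\mapsto(q+2i,a-2i,t+2-2i)$ (so it changes $\Delta$ by $2-2i$), converging to a one-dimensional space. A knot is called $d_1$-standard if all higher differentials $d_1^{(i)}$, $i\ge2$, of this spectral sequence vanish. *)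

From HB Require Import structures.
From mathcomp Require Import all_boot all_order all_algebra.
Set Implicit Arguments. Unset Strict Implicit. Unset Printing Implicit Defensive.
Import Order.TTheory GRing.Theory Num.Theory.
Local Open Scope ring_scope.

(* Abstract model of Rasmussen's sl(1) spectral sequence on the reduced
   HOMFLY-PT homology H(K) of a knot K.
   Page i (i >= 1) is a triply graded finite-dimensional Q-vector space,
   described in each tri-degree (q,a,t) by its dimension [E i q a t];
   page 1 is H(K).  The i-th differential d^(i) on page i maps degree
   (q,a,t) to (q+2i, a-2i, t+2-2i), given as a rat-matrix (row vectors). *)
Record sl1_spectral_sequence := SL1SS {
  E : nat -> int -> int -> int -> nat;
  d : forall (i : nat) (q a t : int),
        'M[rat]_(E i q a t,
                 E i (q + 2 * i%:Z) (a - 2 * i%:Z) (t + 2 - 2 * i%:Z));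
  dd0 : forall (i : nat) (q a t : int),
        d i q a t *m d i (q + 2 * i%:Z) (a - 2 * i%:Z) (t + 2 - 2 * i%:Z) = 0;
  (* E_{i+1} = ker d^(i) / im d^(i) in each tri-degree *)
  next_page : forall (i : nat) (q a t : int), (1 <= i)%N ->
        E i.+1 q a t =
          (E i q a t - \rank (d i q a t)
             - \rank (d i (q - 2 * i%:Z) (a + 2 * i%:Z) (t - 2 + 2 * i%:Z)))%N;
  fin_supp : exists s : seq (int * int * int),
        forall q a t, (q, a, t) \notin s -> E 1 q a t = 0%N;
  converges : exists N : nat, exists g : int * int * int,
        forall i, (N <= i)%N -> forall q a t,
          E i q a t = (if (q, a, t) == g then 1 else 0)%N
}.

Definition delta (q a t : int) : int := q + a + t.

Definition H_nonzero (S : sl1_spectral_sequence) (a D : int) : Prop :=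
  exists q t : int, delta q a t = D /\ E S 1 q a t <> 0%N.

Definition d1_standard (S : sl1_spectral_sequence) : Prop :=
  forall (i : nat) (q a t : int), (2 <= i)%N -> d S i q a t = 0.

(* The differential d^(i) shifts the Delta-grading by 2 - 2i, and every page
   is a subquotient of E_1 = H(K).  So d^(i) can only be nonzero when H(K) is
   nonzero in two Delta-gradings 2i - 2 apart.  With one Delta-grading this
   never happens for i >= 2; with the two gradings Delta and Delta + 2 only
   d^(2) survives, and it lowers the a-degree by exactly 4, which the
   hypothesis on a-degrees forbids. *)

From HB Require Import structures.
From mathcomp Require Import all_boot all_order all_algebra.
From mathcomp Require Import zify.
Import Order.TTheory GRing.Theory Num.Theory.
Local Open Scope ring_scope.

Lemma mx_dim0 (R : nmodType) (m n : nat) (M : 'M[R]_(m, n)) :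
  (m * n = 0)%N -> M = 0.
Proof.
move=> /eqP; rewrite muln_eq0 => mn0; apply/matrixP => i j; exfalso.
move: (ltn_ord i) (ltn_ord j); move: (nat_of_ord i) (nat_of_ord j) => x y.
by case/orP: mn0 => /eqP ->.
Qed.

Section PageDimensions.

Variable S : sl1_spectral_sequence.

Lemma E_pageS_le (i : nat) (q a t : int) :
  (1 <= i)%N -> (E S i.+1 q a t <= E S i q a t)%N.
Proof. by move=> i_gt0; rewrite next_page // -subnDA leq_subr. Qed.

Lemma E_le_page1 (i : nat) (q a t : int) :
  (1 <= i)%N -> (E S i q a t <= E S 1 q a t)%N.
Proof.
case: i => [//|k] _; elim: k => [//|k IHk].
exact: leq_trans (E_pageS_le _ _ _ _ (ltn0Sn k)) IHk.
Qed.

Lemma d_eq0_of_E1 (i : nat) (q a t : int) : (1 <= i)%N ->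
  (E S 1 q a t = 0%N \/
   E S 1 (q + 2 * i%:Z) (a - 2 * i%:Z) (t + 2 - 2 * i%:Z) = 0%N) ->
  d S i q a t = 0.
Proof.
move=> i_gt0 E1_0; apply: mx_dim0; apply/eqP; rewrite muln_eq0 -!leqn0.
case: E1_0 => E1_0; apply/orP; [left | right];
  by apply: leq_trans (E_le_page1 _ _ _ _ i_gt0) _; rewrite E1_0.
Qed.

Lemma d1_standard_of_E1
    (no_pair : forall (i : nat) (q a t : int), (2 <= i)%N ->
       E S 1 q a t <> 0%N ->
       E S 1 (q + 2 * i%:Z) (a - 2 * i%:Z) (t + 2 - 2 * i%:Z) <> 0%N ->
       False) :
  d1_standard S.
Proof.
move=> i q a t i_ge2; apply: d_eq0_of_E1; first exact: ltnW.
have [src0|/eqP src_nz] := eqVneq (E S 1 q a t) 0%N; first by left.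
have [tgt0|/eqP tgt_nz] :=
  eqVneq (E S 1 (q + 2 * i%:Z) (a - 2 * i%:Z) (t + 2 - 2 * i%:Z)) 0%N.
  by right.
by case: (no_pair i q a t i_ge2 src_nz tgt_nz).
Qed.

End PageDimensions.

Lemma delta_d_shift (i : nat) (q a t : int) :
  delta (q + 2 * i%:Z) (a - 2 * i%:Z) (t + 2 - 2 * i%:Z) =
  delta q a t + 2 - 2 * i%:Z.
Proof. by rewrite /delta; lia. Qed.

Theorem lemma2p15 (S : sl1_spectral_sequence) :
  ((exists D : int, forall q a t : int,
       E S 1 q a t <> 0%N -> delta q a t = D) ->
     d1_standard S)
  /\
  (forall D : int,
     (forall q a t : int,
        E S 1 q a t <> 0%N -> delta q a t = D \/ delta q a t = D + 2) ->
     (exists a, H_nonzero S a D) ->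
     (exists a, H_nonzero S a (D + 2)) ->
     (forall a1 a2 : int,
        H_nonzero S a1 (D + 2) -> H_nonzero S a2 D -> a1 - 4 < a2) ->
     d1_standard S).
Proof.
split.
  move=> [D supp]; apply: d1_standard_of_E1 => i q a t i_ge2 src tgt.
  have := delta_d_shift i q a t; rewrite (supp _ _ _ src) (supp _ _ _ tgt).
  lia.
move=> D supp _ _ a_gap; apply: d1_standard_of_E1 => i q a t i_ge2 src tgt.
have shift := delta_d_shift i q a t.
have [i2 src_D2] : i%:Z = 2 /\ delta q a t = D + 2.
  by move: (supp _ _ _ src) (supp _ _ _ tgt); rewrite shift; lia.
have src_nz : H_nonzero S a (D + 2) by exists q, t.
have tgt_nz : H_nonzero S (a - 2 * i%:Z) D.
  exists (q + 2 * i%:Z), (t + 2 - 2 * i%:Z); split=> //.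
  by rewrite shift src_D2 i2; lia.
by have := a_gap _ _ src_nz tgt_nz; rewrite i2; lia.
Qed.
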